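(* Let $n$ be a positive integer and $g=3n+2$. If $G$ is a pure $(2n+1)$-sparse gapset of genus $g$, then $G$ is not symmetric.
   Context: A gapset is a finite set $G\subset\mathbb{N}=\{1,2,\dots\}$ such that whenever $z\in G$ and $z=x+y$ with $x,y\in\mathbb{N}$, then $x\in G$ or $y\in G$; its genus is $g=\#G$. Writing $G=\{\ell_1<\dots<\ell_g\}$, the Frobenius number is $F(G)=\ell_g$; $G$ is symmetric if $F(G)=2g-1$. $G$ is pure $\kappa$-sparse if $\ell_{i+1}-\ell_i\le\kappa$ for all $i$ with equality for some $i$. *)

From mathcomp Require Import all_boot.
Set Implicit Arguments. Unset Strict Implicit. Unset Printing Implicit Defensive.

(* A gapset is represented by the strictly increasing list of its elements
   G = [:: l_1; ...; l_g] (so the list determines the finite set, and the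
   genus is its size). *)

Definition is_gapset (G : seq nat) : Prop :=
  sorted ltn G /\ (forall z, z \in G -> 0 < z) /\
  (forall x y, 0 < x -> 0 < y -> x + y \in G -> x \in G \/ y \in G).

Definition genus (G : seq nat) : nat := size G.

(* Frobenius number: largest element l_g (0 for the empty gapset). *)
Definition frobenius (G : seq nat) : nat := last 0 G.

Definition symmetric_gapset (G : seq nat) : Prop :=
  frobenius G = 2 * genus G - 1.

(* pure kappa-sparse: l_{i+1} - l_i <= kappa for all i, with equality for some i
   (indices 0-based: i ranges over 0 .. g-2). *)
Definition pure_sparse (kappa : nat) (G : seq nat) : Prop :=
  (forall i, i.+1 < size G -> nth 0 G i.+1 - nth 0 G i <= kappa) /\
  (exists i, i.+1 < size G /\ nth 0 G i.+1 - nth 0 G i = kappa).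

From mathcomp Require Import all_boot.
From mathcomp Require Import zify.

Set Implicit Arguments.
Unset Strict Implicit.

(* Let [a < b] be consecutive elements of [G] with [b - a = 2n+1].  Every
   [0 < k <= 2n] lies in [G], since otherwise [b - k], strictly between [a]
   and [b], would.  Also [2n+1] lies in [G]: otherwise [F - (2n+1) = 4n+2 =
   2(2n+1)] would, which forces [2n+1] into [G].  In a symmetric gapset [x]
   and [F - x] are never both gaps, so [F - 1, ..., F - (2n+1)] are not gaps
   and the largest gap below [F = 6n+3] is at most [4n+1]: the last step is at
   least [2n+2], contradicting [(2n+1)]-sparseness. *)

Section SortedNat.

Variable s : seq nat.
Hypothesis s_sorted : sorted ltn s.

Lemma sorted_nth_ltn i j : i < j -> j < size s -> nth 0 s i < nth 0 s j.
Proof.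
by move=> ij js; apply: (sorted_ltn_nth ltn_trans 0 s_sorted) => //; rewrite inE; lia.
Qed.

Lemma sorted_nth_leq i j : i <= j -> j < size s -> nth 0 s i <= nth 0 s j.
Proof.
rewrite leq_eqVlt => /orP[/eqP -> // | ij] js.
exact/ltnW/sorted_nth_ltn.
Qed.

Lemma sorted_notin_between i c : i.+1 < size s ->
  nth 0 s i < c < nth 0 s i.+1 -> c \notin s.
Proof.
move=> isz /andP[ac cb]; apply/negP => /(nthP 0)[j js cj].
move: ac cb; rewrite -cj; case: (leqP j i) => [ji | ij].
- by rewrite ltnNge sorted_nth_leq // ltnW.
- by move=> _; rewrite ltnNge sorted_nth_leq.
Qed.

End SortedNat.

Section Gapset.

Variable G : seq nat.
Hypothesis G_gapset : is_gapset G.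

Lemma gapset_sub_mem b k : b \in G -> 0 < k < b -> k \notin G -> b - k \in G.
Proof.
case: G_gapset => _ [_ gap] bG /andP[k0 kb] kG.
have bk0 : 0 < b - k by rewrite subn_gt0.
have := gap k (b - k) k0 bk0; rewrite subnKC ?(ltnW kb) // => /(_ bG)[kG' | //].
by rewrite kG' in kG.
Qed.

Lemma gapset_double_mem x : 0 < x -> x.*2 \in G -> x \in G.
Proof.
case: G_gapset => _ [_ gap] x0; rewrite -addnn => /(gap x x x0 x0).
by case.
Qed.

Lemma frobenius_mem : 0 < genus G -> frobenius G \in G.
Proof. by rewrite /frobenius; case: G => // x t _; apply: mem_last. Qed.

Lemma frobenius_nth : frobenius G = nth 0 G (genus G).-1.
Proof. by rewrite /frobenius nth_last. Qed.

Lemma gapset_consecutive_gap_mem i k : i.+1 < genus G ->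
  0 < k < nth 0 G i.+1 - nth 0 G i -> k \in G.
Proof.
move=> isz /andP[k0 kd]; apply/negPn/negP => kG.
have sG : sorted ltn G by case: G_gapset.
set a := nth 0 G i in kd; set b := nth 0 G i.+1 in kd.
have bG : b \in G by apply: mem_nth.
have /negP[] : b - k \notin G by apply: (sorted_notin_between sG isz); lia.
by apply: gapset_sub_mem bG _ kG; lia.
Qed.

(* Counting: [F], [F - x] and, for [0 < y < g], one of [y], [F - y] give
   [g + 1] distinct gaps. *)
Lemma symmetric_gapset_no_pair x : symmetric_gapset G ->
  0 < x < frobenius G -> x \in G -> frobenius G - x \in G -> False.
Proof.
rewrite /symmetric_gapset; set F := frobenius G; set g := genus G => FE xF xG FxG.
wlog xg : x xF xG FxG / x < g.
  move=> wlog_x; case: (ltnP x g) => xg; first exact: (wlog_x x).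
  by apply: (wlog_x (F - x)); rewrite ?subKn //; lia.
have FG : F \in G by apply: frobenius_mem; lia.
pose h y := if y \in G then y else F - y.
have hG y : 0 < y < g -> h y \in G.
  move=> y0; rewrite /h; case: ifPn => // yG.
  by apply: gapset_sub_mem FG _ yG; lia.
have hF y : 0 < y < g -> h y < F by rewrite /h; case: ifP; lia.
pose s := F :: (F - x) :: map h (iota 1 (g - 1)).
have s_uniq : uniq s.
  rewrite /= map_inj_in_uniq ?iota_uniq ?andbT; last first.
    by move=> a b; rewrite !mem_iota /h; case: ifP; case: ifP; lia.
  rewrite inE negb_or -andbA; apply/and3P; split.
  - by apply/eqP; lia.
  - by apply/mapP => -[y]; rewrite mem_iota => y1 Fy; have := hF y; lia.
  - apply/mapP => -[y]; rewrite mem_iota /h => y1.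
    by case: ifPn => yG; [lia | move=> yx; rewrite (_ : y = x) ?xG in yG; lia].
have s_sub : {subset s <= G}.
  move=> z; rewrite !inE => /or3P[/eqP -> // | /eqP -> // | /mapP[y]].
  by rewrite mem_iota => y1 ->; apply: hG; lia.
have := uniq_leq_size s_uniq s_sub; rewrite /= size_map size_iota.
by change (size G) with g; lia.
Qed.

End Gapset.

Theorem mainTheorem8 (n : nat) (G : seq nat) :
  0 < n -> is_gapset G -> genus G = 3 * n + 2 ->
  pure_sparse (2 * n + 1) G -> ~ symmetric_gapset G.
Proof.
move=> n0 gs; rewrite /genus => gG [sparse [i [isz iwide]]] sym.
have FE : frobenius G = 6 * n + 3 by move: sym; rewrite /symmetric_gapset /genus gG; lia.
have FG : frobenius G \in G by apply: frobenius_mem; rewrite /genus gG addn2.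
have mid : 2 * n + 1 \in G.
  apply/negPn/negP => mG; apply/(negP mG)/(gapset_double_mem gs); first lia.
  rewrite (_ : _.*2 = frobenius G - (2 * n + 1)); last by rewrite FE -addnn; lia.
  by apply: (gapset_sub_mem gs FG _ mG); lia.
have low k : 0 < k <= 2 * n + 1 -> k \in G.
  move=> k0; case: (ltnP k (2 * n + 1)) => kn.
  - by apply: (gapset_consecutive_gap_mem gs isz); lia.
  - by rewrite (_ : k = 2 * n + 1) //; lia.
set c := nth 0 G (size G).-2.
have cG : c \in G by apply: mem_nth; rewrite gG; lia.
have cF : c < frobenius G.
  by rewrite frobenius_nth /genus; apply: (sorted_nth_ltn (proj1 gs)); lia.
have last_step : frobenius G - c <= 2 * n + 1.
  have pred_last : (size G).-2.+1 = (genus G).-1 by rewrite /genus gG addn2.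
  by have := sparse (size G).-2; rewrite pred_last -frobenius_nth; apply; rewrite /genus gG; lia.
apply: (symmetric_gapset_no_pair gs (x := frobenius G - c) sym); rewrite ?subKn ?(ltnW cF) //.
- lia.
- by apply: low; lia.
Qed.
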